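(* For integers $i\ge0$, $j\ge0$, $j_1\ge0$, $j_2\ge0$ and real $k_1,k_2,k$: (a) $b_{i,j_1+j_2,0}=\sum_{r=0}^{i}\binom{i}{r}b_{r,j_1,k}\,b_{i-r,j_2,-k}$; (b) $b_{i,j,0}=\sum_{r=0}^{i}\binom{i}{r}k^r\,b_{i-r,j,-k}$; (c) $b_{i,j,k}=\sum_{r=0}^{i}\binom{i}{r}k^{i-r}\,b_{r,j,0}$; (d) $b_{i,j,k_1+k_2}=\sum_{r=0}^{i}\binom{i}{r}k_1^{i-r}\,b_{r,j,k_2}$; (e) if $j\ge1$, then $j\cdot b_{i,j-1,k+1}=\sum_{r=0}^{i}\binom{i}{r}k^{i-r}\,b_{r+1,j,0}$.
   Context: For integers $i\ge0$, $j\ge0$ and real $k$, $b_{i,j,k}=\sum_{r=0}^{j}\binom{j}{r}(-1)^{j-r}(r+k)^i$, with the convention $0^0=1$ (also in the powers of $k$, $k_1$ appearing above). *)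

From mathcomp Require Import all_boot all_order all_algebra.
From mathcomp Require Export reals.
Set Implicit Arguments. Unset Strict Implicit. Unset Printing Implicit Defensive.
Import GRing.Theory Num.Theory.
Local Open Scope ring_scope.

(* b_{i,j,k} = sum_{r=0}^{j} C(j,r) (-1)^(j-r) (r+k)^i ; x ^+ 0 = 1 so 0^0 = 1. *)
Definition bcoef (R : ringType) (i j : nat) (k : R) : R :=
  \sum_(r < j.+1) ('C(j, r))%:R * (-1) ^+ (j - r) * (r%:R + k) ^+ i.

(* [bcoef i j k] is the [j]-th forward difference at [0] of [n |-> (n + k)^i].
   Differences compose, so [b_{i, j1 + j2, a + b}] is a double sum over
   [(s, t)] of [((s + a) + (t + b))^i]; expanding this power binomially splits
   the double sum into [sum_r C(i, r) b_{r, j1, a} b_{i - r, j2, b}].  Taking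
   [j1 = 0] or [j2 = 0], where [b_{i, 0, k} = k^i], gives the shift formulas,
   and [s C(j, s) = j C(j - 1, s - 1)] trades one power of the variable for a
   lower difference order. *)
From mathcomp Require Import all_boot all_order all_algebra.
From mathcomp Require Import reals.
From mathcomp Require Import ring.
Import GRing.Theory Num.Theory.
Local Open Scope ring_scope.

Section FiniteDifference.
Variable R : comNzRingType.
Implicit Types (f : nat -> R) (a b : R).

Definition finite_diff (j : nat) f (n : nat) : R :=
  \sum_(r < j.+1) ('C(j, r))%:R * (-1) ^+ (j - r) * f (n + r)%N.

Lemma finite_diff0 f n : finite_diff 0 f n = f n.
Proof. by rewrite /finite_diff big_ord1 bin0 expr0 !mul1r addn0. Qed.

Lemma finite_diffS j f n :
  finite_diff j.+1 f n = finite_diff j f n.+1 - finite_diff j f n.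
Proof.
rewrite [LHS]/finite_diff big_ord_recl /= bin0 subn0 mul1r addn0.
under eq_bigr => r _ do rewrite /= binS subSS natrD !mulrDl.
rewrite big_split /=.
have shifted : \sum_(r < j.+1) ('C(j, r))%:R * (-1) ^+ (j - r) * f (n + bump 0 r)%N
    = finite_diff j f n.+1.
  by apply: eq_bigr => r _; rewrite /bump /= add1n addnS.
have lower : \sum_(r < j.+1) ('C(j, r.+1))%:R * (-1) ^+ (j - r) * f (n + bump 0 r)%N
    = (-1) ^+ j * f n - finite_diff j f n.
  rewrite big_ord_recr /= bin_small // !mul0r addr0 /finite_diff big_ord_recl.
  rewrite bin0 subn0 mul1r addn0 opprD addrA subrr add0r -sumrN.
  apply: eq_bigr => r _; rewrite /bump /= add1n -(subnSK (ltn_ord r)) exprS.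
  by rewrite mulNr mul1r mulrN mulNr.
by rewrite shifted lower exprS; ring.
Qed.

Lemma finite_diffD j1 j2 f n :
  finite_diff (j1 + j2) f n = finite_diff j1 (finite_diff j2 f) n.
Proof.
elim: j1 n => [|j1 IH] n; first by rewrite finite_diff0.
by rewrite addSn !finite_diffS !IH.
Qed.

Lemma bcoef_finite_diff i j a :
  bcoef i j a = finite_diff j (fun n => (n%:R + a) ^+ i) 0.
Proof. by apply: eq_bigr => r _; rewrite add0n. Qed.

Lemma bcoef0 i a : bcoef i 0 a = a ^+ i.
Proof. by rewrite bcoef_finite_diff finite_diff0 add0r. Qed.

Lemma bcoef_convolution i j1 j2 a b :
  bcoef i (j1 + j2) (a + b) =
    \sum_(r < i.+1) ('C(i, r))%:R * bcoef r j1 a * bcoef (i - r) j2 b.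
Proof.
rewrite bcoef_finite_diff finite_diffD /finite_diff /bcoef.
under [RHS]eq_bigr => r _ do rewrite -mulrA big_distrlr /= mulr_sumr.
rewrite exchange_big /=; apply: eq_bigr => s _.
under [RHS]eq_bigr => r _ do rewrite mulr_sumr.
rewrite exchange_big mulr_sumr /=; apply: eq_bigr => t _.
have -> : (0 + s + t)%N%:R + (a + b) = (t%:R + b) + (s%:R + a) :> R.
  by rewrite add0n natrD; ring.
rewrite exprDn !mulr_sumr; apply: eq_bigr => r _.
by rewrite -mulr_natr; ring.
Qed.

Lemma bcoef_shift i j a b :
  bcoef i j (a + b) = \sum_(r < i.+1) ('C(i, r))%:R * a ^+ (i - r) * bcoef r j b.
Proof.
rewrite -[in LHS](addn0 j) addrC bcoef_convolution.
by apply: eq_bigr => r _; rewrite bcoef0 mulrAC.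
Qed.

Lemma bcoef_succ i j : bcoef i.+1 j.+1 (0 : R) = j.+1%:R * bcoef i j 1.
Proof.
rewrite /bcoef big_ord_recl /= addr0 expr0n /= mulr0 add0r mulr_sumr.
apply: eq_bigr => s _; rewrite /bump /= add1n subSS addr0.
by rewrite natr1 !mulrA -natrM mul_bin_diag natrM exprS; ring.
Qed.

End FiniteDifference.

Theorem mainTheorem9 (R : realType) (i j j1 j2 : nat) (k1 k2 k : R) :
  [/\ bcoef i (j1 + j2) 0 =
        \sum_(r < i.+1) ('C(i, r))%:R * bcoef r j1 k * bcoef (i - r) j2 (- k),
      bcoef i j 0 =
        \sum_(r < i.+1) ('C(i, r))%:R * k ^+ r * bcoef (i - r) j (- k),
      bcoef i j k =
        \sum_(r < i.+1) ('C(i, r))%:R * k ^+ (i - r) * bcoef r j 0,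
      bcoef i j (k1 + k2) =
        \sum_(r < i.+1) ('C(i, r))%:R * k1 ^+ (i - r) * bcoef r j k2
    & (1 <= j)%N ->
      j%:R * bcoef i j.-1 (k + 1) =
        \sum_(r < i.+1) ('C(i, r))%:R * k ^+ (i - r) * bcoef r.+1 j 0].
Proof.
split.
- by rewrite -[in LHS](subrr k) bcoef_convolution.
- rewrite -[in LHS](subrr k) -[in LHS](add0n j) bcoef_convolution.
  by apply: eq_bigr => r _; rewrite bcoef0.
- by rewrite -[k in LHS]addr0 bcoef_shift.
- exact: bcoef_shift.
- case: j => [//|j] _ /=.
  rewrite bcoef_shift mulr_sumr; apply: eq_bigr => r _.
  by rewrite bcoef_succ mulrCA mulrA.
Qed.
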